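(* Let $S\in\mathbb{R}^{n_\theta\times n_\theta}$, $F\in\mathbb{R}^{n_x\times n_\theta}$, and $\theta_0\in\mathbb{R}^{n_\theta}$ satisfy the standing assumptions in the context, with excited modes $v_1,\dots,v_{k_1+k_2}$ and eigenvalues $\lambda_1,\dots,\lambda_{k_1+k_2}$. Let $y_n$, $z_\ell$, $Z_\ell$, $Y_n$ and $w_j$ be as defined in the context. (i) For every $\ell\ge 0$, the vectors $z_0,z_1,\dots,z_\ell$ are pairwise orthogonal. Some of them may be the zero vector. (ii) Assume further that $\lambda_1,\dots,\lambda_{k_1+k_2}$ are pairwise distinct, and that $\lambda_i\neq 1$ for every $i=1,\dots,k_1$. Let $n\ge 1$ and let $m$ be an integer with $1\le m\le \min(n,k_1)$. Then $w_1,\dots,w_m$ are linearly independent. Here $w_1,\dots,w_m$ are the first $m$ columns of the matrix $[\,y_1,\ Y_n\,]$.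
   Context: Standing assumptions: $S\in\mathbb{R}^{n_\theta\times n_\theta}$ and $F\in\mathbb{R}^{n_x\times n_\theta}$. $F^\dagger$ denotes the Moore–Penrose pseudoinverse, so that $F^\dagger F$ is the orthogonal projection onto $\mathcal{R}(F^\top)$. The initial vector $\theta_0\in\mathbb{R}^{n_\theta}$ can be written as $\theta_0=\sum_{i=1}^{k_1+k_2}\rho_i v_i$ with $\rho_i\in\mathbb{C}\setminus\{0\}$, where each $v_i\in\mathbb{C}^{n_\theta}$ is an eigenvector of $S$, i.e. $Sv_i=\lambda_i v_i$. The first $k_1$ of them lie in $\mathcal{R}(F^\top)$ (complexified), i.e. $F^\dagger F v_i=v_i$ for $i\le k_1$. The remaining $k_2$ lie in $\mathcal{R}(F^\top)^\perp$, i.e. $F^\dagger F v_i=0$ for $k_1<i\le k_1+k_2$. These $v_i$ are called the excited modes of $S$. Data: for $n\ge1$ let $y_n:=F^\dagger F\,S^{n-1}(S-I)\theta_0\in\mathbb{R}^{n_\theta}$. In the paper, $y_n=F^\dagger(\Delta x_n-\Delta f_n)$ is computed from state measurements, and the trapezoidal integration error is assumed to be zero, which gives this identity. Recursions: - Set $z_0:=y_1$ and $Z_0:=[z_0]$. - For $\ell\ge1$, set $z_\ell:=(I-Z_{\ell-1}Z_{\ell-1}^\dagger)\,y_{\ell+1}$, which is the orthogonal projection of $y_{\ell+1}$ onto $\mathcal{R}(Z_{\ell-1})^\perp$. Then set $Z_\ell:=[\,Z_{\ell-1},\ z_\ell\,]=[z_0,\dots,z_\ell]$. - Set $Y_2:=[\,y_2\,]$.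 For $n\ge3$, set $Y_n:=[\,Y_{n-1},\ y_n-Y_{n-1}Z_{n-3}^\dagger y_{n-1}\,]$. Finally define $w_1:=y_1$, $w_2:=y_2$, and for $j\ge3$ let $w_j:=y_j-Y_{j-1}Z_{j-3}^\dagger y_{j-1}$, the last column of $Y_j$. Thus $[\,y_1,\ Y_n\,]=[w_1,\dots,w_n]$. *)

From HB Require Import structures.
From mathcomp Require Import all_boot all_order all_algebra.
From mathcomp Require Import complex.
Set Implicit Arguments. Unset Strict Implicit. Unset Printing Implicit Defensive.
Import Order.TTheory GRing.Theory Num.Theory.
Local Open Scope ring_scope.

(* Moore--Penrose pseudoinverse, via the full-rank factorization
   A = col_base A *m row_base A (lemma mulmx_base):
   A^+ = B^T (B B^T)^-1 (C^T C)^-1 C^T  with C = col_base A, B = row_base A. *)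
Definition pinv (R : fieldType) (m n : nat) (A : 'M[R]_(m, n)) : 'M[R]_(n, m) :=
  let C := col_base A in let B := row_base A in
  B^T *m invmx (B *m B^T) *m invmx (C^T *m C) *m C^T.

Definition colsmx (R : pzRingType) (n k : nat) (s : seq 'cV[R]_n) : 'M[R]_(n, k) :=
  \matrix_(i < n, j < k) (nth 0 s j) i 0.

Definition ydat (R : fieldType) (nx nt : nat) (S : 'M[R]_nt) (F : 'M[R]_(nx, nt))
  (theta0 : 'cV[R]_nt) (n : nat) : 'cV[R]_nt :=
  pinv F *m F *m (S ^+ n.-1 *m (S - 1%:M) *m theta0).

Section Recursions.
Variables (R : fieldType) (nt : nat) (y : nat -> 'cV[R]_nt).

(* zs l = [:: z_0; ...; z_l] *)
Fixpoint zs (l : nat) : seq 'cV[R]_nt :=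
  match l with
  | 0 => [:: y 1%N]
  | l'.+1 => let s := zs l' in
      rcons s ((1%:M - colsmx l'.+1 s *m pinv (colsmx l'.+1 s)) *m y l'.+2)
  end.

Definition zvec (l : nat) : 'cV[R]_nt := nth 0 (zs l) l.
Definition Zmat (l : nat) : 'M[R]_(nt, l.+1) := colsmx l.+1 (zs l).

(* wseq n = [:: w_1; ...; w_n], the columns of [y_1, Y_n] *)
Fixpoint wseq (n : nat) : seq 'cV[R]_nt :=
  match n with
  | 0 => [::]
  | 1 => [:: y 1%N]
  | 2 => [:: y 1%N; y 2%N]
  | (k.+2 as p).+1 => let s := wseq p in
      (* Y_{k+2} = colsmx k.+1 (behead s), Z_k has k+1 columns *)
      rcons s (y p.+1 - colsmx k.+1 (behead s) *m pinv (Zmat k) *m y k.+2)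
  end.

Definition Ymat (n : nat) : 'M[R]_(nt, n.-1) := colsmx n.-1 (behead (wseq n)).
Definition wvec (j : nat) : 'cV[R]_nt := nth 0 (wseq j) j.-1.

End Recursions.

From HB Require Import structures.
From mathcomp Require Import all_boot all_order all_algebra.
From mathcomp Require Import complex.
Import Order.TTheory GRing.Theory Num.Theory.
Local Open Scope ring_scope.
Set Implicit Arguments. Unset Strict Implicit. Unset Printing Implicit Defensive.

(* (i) [Z_l Z_l^+] is the orthogonal projector onto the column space of [Z_l],
   so the residual [z_(l+1) = (I - Z_l Z_l^+) y_(l+2)] is orthogonal to every
   column [z_0, ..., z_l] of [Z_l].
   (ii) Each [w_j] is [y_j] minus a combination of [w_1, ..., w_(j-1)], so it
   suffices that [y_(j+1)] is not in the span of [y_1, ..., y_j] for [j < k1].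
   Over the complex numbers [y_(n+1) = sum_k lambda_k^n c_k v_k], where
   [c_k = rho_k (lambda_k - 1)] for the [k1] modes in [R(F^T)] and [c_k = 0]
   otherwise.  Since eigenvectors for distinct eigenvalues are independent, a
   relation [y_(j+1) = sum_(i < j) a_i y_(i+1)] makes the [k1 > j] distinct
   [lambda_k] roots of the monic degree-[j] polynomial [X^j - sum a_i X^i]. *)

Section PseudoInverse.
Variable R : realFieldType.

Lemma row_mul_tr_eq0 n (w : 'rV[R]_n) : w *m w^T = 0 -> w = 0.
Proof.
move=> /matrixP /(_ 0 0); rewrite !mxE => /eqP sq0.
have sq_ge0 j : 0 <= w 0 j * w^T j 0 by rewrite mxE -expr2 sqr_ge0.
apply/matrixP => i j; rewrite mxE (ord1 i).
move/eqP: sq0 => /(psumr_eq0P (fun j _ => sq_ge0 j)) /(_ j isT).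
by rewrite mxE => /eqP; rewrite mulf_eq0 orbb => /eqP.
Qed.

Lemma row_free_gram_unitmx r n (M : 'M[R]_(r, n)) :
  row_free M -> M *m M^T \in unitmx.
Proof.
move=> freeM; rewrite unitmxE unitfE; apply/det0P => -[u u_neq0 uMMt0].
have : (u *m M) *m (u *m M)^T = 0.
  by rewrite trmx_mul mulmxA -(mulmxA u) uMMt0 mul0mx.
by move/row_mul_tr_eq0/eqP; rewrite mulmx_free_eq0 // (negbTE u_neq0).
Qed.

Lemma col_base_gram_unitmx m n (A : 'M[R]_(m, n)) :
  (col_base A)^T *m col_base A \in unitmx.
Proof.
rewrite -[X in _ *m X]trmxK; apply: row_free_gram_unitmx.
by rewrite /row_free mxrank_tr; exact: col_base_full.
Qed.

Lemma mulmx_pinv m n (A : 'M[R]_(m, n)) : A *m pinv A =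
  col_base A *m invmx ((col_base A)^T *m col_base A) *m (col_base A)^T.
Proof.
rewrite /pinv -{1}(mulmx_base A).
have := row_free_gram_unitmx (row_base_free A).
move: (row_base A) (col_base A) => B C BBt_unit.
rewrite !mulmxA -[C *m B *m B^T]mulmxA -[C *m (B *m B^T) *m _]mulmxA.
by rewrite mulmxV ?mulmx1.
Qed.

Lemma trmx_mulmx_pinv m n (A : 'M[R]_(m, n)) : (A *m pinv A)^T = A *m pinv A.
Proof.
rewrite mulmx_pinv; move: (col_base A) => C.
by rewrite !trmx_mul trmxK trmx_inv trmx_mul trmxK mulmxA.
Qed.

Lemma mulmx_pinvK m n (A : 'M[R]_(m, n)) : A *m pinv A *m A = A.
Proof.
rewrite mulmx_pinv -[RHS](mulmx_base A) -[X in _ *m X = _](mulmx_base A).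
have := col_base_gram_unitmx A.
move: (row_base A) (col_base A) => B C CtC_unit.
by rewrite -!mulmxA [C^T *m (C *m B)]mulmxA (mulmxA (invmx _)) mulVmx // mul1mx.
Qed.

Lemma trmx_mul_pinv_residual m n p (A : 'M[R]_(m, n)) (B : 'M[R]_(m, p)) :
  A^T *m ((1%:M - A *m pinv A) *m B) = 0.
Proof.
rewrite mulmxA -[A^T *m _]trmxK trmx_mul trmxK linearB /= trmx1.
by rewrite trmx_mulmx_pinv mulmxBl mul1mx mulmx_pinvK subrr trmx0 mul0mx.
Qed.

End PseudoInverse.

Section Residuals.
Variables (R : realFieldType) (nt : nat) (y : nat -> 'cV[R]_nt).

Lemma size_zs l : size (zs y l) = l.+1.
Proof. by elim: l => //= l IH; rewrite size_rcons IH. Qed.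

Lemma nth_zs l i : (i <= l)%N -> nth 0 (zs y l) i = zvec y i.
Proof.
elim: l => [|l IH]; first by rewrite leqn0 => /eqP->.
rewrite leq_eqVlt => /orP[/eqP->//|]; rewrite ltnS => il.
by rewrite /= nth_rcons size_zs ltnS il IH.
Qed.

Lemma col_Zmat l (i : 'I_l.+1) : col i (Zmat y l) = zvec y i.
Proof.
by apply/matrixP => a b; rewrite !mxE (ord1 b) nth_zs // -ltnS.
Qed.

Lemma zvecS l : zvec y l.+1 = (1%:M - Zmat y l *m pinv (Zmat y l)) *m y l.+2.
Proof. by rewrite /zvec /= nth_rcons size_zs ltnn eqxx. Qed.

Lemma zvec_orth_lt i j : (i < j)%N -> (zvec y i)^T *m zvec y j = 0.
Proof.
case: j => // l; rewrite ltnS -ltnS => il.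
rewrite zvecS -(col_Zmat (Ordinal il)) colE trmx_mul -mulmxA.
by rewrite trmx_mul_pinv_residual mulmx0.
Qed.

Lemma zvec_orth i j : i != j -> (zvec y i)^T *m zvec y j = 0.
Proof.
case: ltngtP => // [/zvec_orth_lt //|/zvec_orth_lt ji _].
by rewrite -[LHS]trmxK trmx_mul trmxK ji trmx0.
Qed.

End Residuals.

Section ColumnRecursion.
Variables (R : fieldType) (nt : nat) (y : nat -> 'cV[R]_nt).

Lemma colsmx_mul_memv k (s : seq 'cV[R]_nt) (c : 'cV[R]_k) :
  colsmx k s *m c \in <<s>>%VS.
Proof.
have -> : colsmx k s *m c = \sum_(j < k) c j 0 *: nth 0 s j.
  apply/matrixP => a b; rewrite !mxE summxE; apply: eq_bigr => j _.
  by rewrite !mxE (ord1 b) mulrC.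
apply: memv_suml => j _; apply: memvZ.
have [js|sj] := ltnP j (size s); first exact/memv_span/mem_nth.
by rewrite nth_default // mem0v.
Qed.

Lemma wseqS j : exists2 u, u \in <<wseq y j>>%VS &
  wseq y j.+1 = rcons (wseq y j) (y j.+1 - u).
Proof.
case: j => [|[|k]]; try by exists 0; rewrite ?mem0v ?subr0.
exists (colsmx k.+1 (behead (wseq y k.+2)) *m (pinv (Zmat y k) *m y k.+2)).
  apply: subvP (colsmx_mul_memv _ _).
  by apply/span_subvP => x /mem_behead; apply: memv_span.
by rewrite mulmxA.
Qed.

Lemma size_wseq n : size (wseq y n) = n.
Proof. by elim: n => // n IH; have [u _ ->] := wseqS n; rewrite size_rcons IH. Qed.

Lemma take_wseq m n : (m <= n)%N -> take m (wseq y n) = wseq y m.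
Proof.
elim: n => [|n IH]; first by rewrite leqn0 => /eqP->.
rewrite leq_eqVlt => /orP[/eqP->|]; first by rewrite take_oversize // size_wseq.
rewrite ltnS => mn; have [u _ ->] := wseqS n.
by rewrite -cats1 takel_cat ?size_wseq // IH.
Qed.

Lemma span_wseq j : (<<wseq y j>> <= <<mkseq (fun i => y i.+1) j>>)%VS.
Proof.
elim: j => [|j IH]; first by rewrite span_nil sub0v.
have [u u_in ->] := wseqS j; rewrite mkseqS.
have sub_rcons : (<<mkseq (fun i => y i.+1) j>> <=
                  <<rcons (mkseq (fun i => y i.+1) j) (y j.+1)>>)%VS.
  by apply/span_subvP => x x_in; rewrite memv_span // mem_rcons inE x_in orbT.
apply/span_subvP => x; rewrite mem_rcons inE => /orP[/eqP->|x_in].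
  apply: memvB; first by rewrite memv_span // mem_rcons mem_head.
  exact: subvP sub_rcons _ (subvP IH _ u_in).
exact: subvP sub_rcons _ (subvP IH _ (memv_span x_in)).
Qed.

Lemma free_wseq k :
  (forall j, (j < k)%N -> y j.+1 \notin <<mkseq (fun i => y i.+1) j>>%VS) ->
  free (wseq y k).
Proof.
elim: k => [|k IH] y_new; first exact: nil_free.
have [u u_in ->] := wseqS k.
rewrite (perm_free (permEl (perm_rcons _ _))) free_cons IH ?andbT; last first.
  by move=> j jk; apply: y_new; apply: ltnW.
apply: contra (y_new k (ltnSn k)) => w_in.
by rewrite -(subrK u (y k.+1)); apply: subvP (span_wseq k) _ (memvD w_in u_in).
Qed.

End ColumnRecursion.

Section Eigenvectors.
Variables (K : fieldType) (nt N : nat) (A : 'M[K]_nt).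
Variables (v : 'I_N -> 'cV[K]_nt) (lambda : 'I_N -> K).
Hypotheses (v_neq0 : forall k, v k != 0)
  (v_eigen : forall k, A *m v k = lambda k *: v k)
  (lambda_inj : injective lambda).

Lemma eigen_sum_seq_eq0 (s : seq 'I_N) (e : 'I_N -> K) : uniq s ->
  \sum_(k <- s) e k *: v k = 0 -> forall k, k \in s -> e k = 0.
Proof.
elim: s e => [|k0 s IH] e //= /andP[k0_notin_s uniq_s]; rewrite big_cons => sum0.
(* applying [A - lambda k0] kills the [k0] term *)
have sum0' : \sum_(k <- s) (e k * (lambda k - lambda k0)) *: v k = 0.
  have := congr1 (mulmx (A - (lambda k0)%:M)) sum0.
  rewrite mulmx0 mulmxDr -scalemxAr mulmxBl v_eigen mul_scalar_mx subrr.
  rewrite scaler0 add0r mulmx_sumr => sumA0.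
  rewrite -[RHS]sumA0; apply: eq_bigr => k _.
  by rewrite -scalemxAr mulmxBl v_eigen mul_scalar_mx -scalerBl scalerA mulrC.
have e_s k : k \in s -> e k = 0.
  move=> k_in; move/eqP: (IH _ uniq_s sum0' k k_in); rewrite mulf_eq0 subr_eq0.
  have /negbTE-> : lambda k != lambda k0.
    by apply: contraNneq k0_notin_s => /lambda_inj <-.
  by rewrite orbF => /eqP.
have : e k0 *: v k0 = 0.
  by rewrite -sum0 big_seq big1 ?addr0 // => k /e_s->; rewrite scale0r.
move/eqP; rewrite scaler_eq0 (negbTE (v_neq0 k0)) orbF => /eqP e_k0.
by move=> k; rewrite inE => /orP[/eqP->|/e_s].
Qed.

Lemma eigen_sum_eq0 (e : 'I_N -> K) : \sum_k e k *: v k = 0 -> forall k, e k = 0.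
Proof.
move=> sum0 k; apply: (eigen_sum_seq_eq0 (index_enum_uniq _) sum0).
exact: mem_index_enum.
Qed.

Lemma eigen_expmx n k : A ^+ n *m v k = lambda k ^+ n *: v k.
Proof.
elim: n => [|n IH]; first by rewrite expr0 mul1mx scale1r.
by rewrite exprS -mulmxE -mulmxA IH -scalemxAr v_eigen scalerA -exprSr.
Qed.

Variables (c : 'I_N -> K) (x : nat -> 'cV[K]_nt).
Hypothesis x_expand : forall n, x n = \sum_k (lambda k ^+ n * c k) *: v k.

Lemma lincomb_expand n (a : 'I_n -> K) :
  \sum_(i < n) a i *: x i = \sum_k ((\sum_(i < n) a i * lambda k ^+ i) * c k) *: v k.
Proof.
under eq_bigr do rewrite x_expand scaler_sumr.
rewrite exchange_big /=; apply: eq_bigr => k _.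
by rewrite mulr_suml scaler_suml; apply: eq_bigr => i _; rewrite scalerA mulrA.
Qed.

Lemma expand_notin_span j :
  (j < #|[pred k | c k != 0%R]|)%N -> x j \notin <<mkseq x j>>%VS.
Proof.
pose X := map_tuple x (iota_tuple j 0); pose a i := coord X i (x j).
move=> many_modes; apply/negP => /(coord_span (X := X)) x_j.
have {}x_j : x j = \sum_(i < j) a i *: x i.
  rewrite [LHS]x_j; apply: eq_bigr => i _.
  by rewrite /= (nth_map 0%N) ?size_iota // nth_iota.
pose q : {poly K} := 'X^j - \sum_(i < j) a i *: 'X^i.
have q_lambda k : q.[lambda k] = lambda k ^+ j - \sum_(i < j) a i * lambda k ^+ i.
  rewrite hornerD hornerN hornerXn horner_sum.
  by congr (_ - _); apply: eq_bigr => i _; rewrite hornerZ hornerXn.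
have q_root k : c k != 0 -> root q (lambda k).
  have : \sum_k (q.[lambda k] * c k) *: v k = 0.
    rewrite -[RHS](subrr (x j)) {2}x_j lincomb_expand x_expand -sumrB.
    by apply: eq_bigr => k' _; rewrite q_lambda -scalerBl mulrBl.
  move/eigen_sum_eq0/(_ k)/eqP; rewrite mulf_eq0 => /orP[q0 _|/eqP->].
    by rewrite rootE.
  by rewrite eqxx.
have size_q : size q = j.+1.
  rewrite size_polyDl size_polyXn // size_polyN ltnS.
  apply: leq_trans (size_sum _ _ _) _; apply/bigmax_leqP => i _.
  by rewrite (leq_trans (size_scale_leq _ _)) // size_polyXn.
suff : (#|[pred k | c k != 0%R]| < size q)%N.
  by rewrite size_q ltnS leqNgt many_modes.
rewrite cardE -(size_map lambda); apply: max_poly_roots.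
- by rewrite -size_poly_eq0 size_q.
- by apply/allP => _ /mapP[k k_mode ->]; apply: q_root; rewrite mem_enum in k_mode.
- by rewrite map_inj_uniq ?enum_uniq.
Qed.

End Eigenvectors.

Section MapMatrix.
Variables (K L : fieldType) (f : {rmorphism K -> L}).

Lemma map_mxX n (A : 'M[K]_n) k : map_mx f (A ^+ k) = map_mx f A ^+ k.
Proof.
elim: k => [|k IH]; first by rewrite !expr0 map_mx1.
by rewrite !exprS -!mulmxE map_mxM IH.
Qed.

Lemma map_mx_memv_span m n (s : seq 'M[K]_(m, n)) u :
  u \in <<s>>%VS -> map_mx f u \in <<map (map_mx f) s>>%VS.
Proof.
elim: s u => [|a s IH] u.
  by rewrite span_nil memv0 => /eqP->; rewrite map_mx0 mem0v.
rewrite /= !span_cons => /memv_addP[_ /vlineP[t ->] [w /IH w_in ->]].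
by rewrite map_mxD map_mxZ; apply: memv_add w_in; apply/memvZ/memv_line.
Qed.

End MapMatrix.

Section ExcitedModes.
Variables (R : rcfType) (nx nt : nat) (S : 'M[R]_nt) (F : 'M[R]_(nx, nt)).
Variables (theta0 : 'cV[R]_nt) (k1 k2 : nat) (v : 'I_(k1 + k2) -> 'cV[R[i]]_nt).
Variables (lambda rho : 'I_(k1 + k2) -> R[i]).
Local Notation phi := (real_complex R).
Local Notation y := (ydat S F theta0).
Hypotheses (rho_neq0 : forall k, rho k != 0) (v_neq0 : forall k, v k != 0)
  (v_eigen : forall k, map_mx phi S *m v k = lambda k *: v k)
  (theta0_modes : map_mx phi theta0 = \sum_k rho k *: v k)
  (proj_in : forall k : 'I_(k1 + k2), (k < k1)%N ->
     map_mx phi (pinv F *m F) *m v k = v k)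
  (proj_out : forall k : 'I_(k1 + k2), (k1 <= k)%N ->
     map_mx phi (pinv F *m F) *m v k = 0).

Definition mode_weight (k : 'I_(k1 + k2)) :=
  if (k < k1)%N then rho k * (lambda k - 1) else 0.

Lemma ydat_expand n :
  map_mx phi (y n.+1) = \sum_k (lambda k ^+ n * mode_weight k) *: v k.
Proof.
rewrite /ydat /= map_mxM [map_mx _ (_ *m theta0)]map_mxM theta0_modes !mulmx_sumr.
apply: eq_bigr => k _.
have S1_v : map_mx phi (S - 1%:M) *m v k = (lambda k - 1) *: v k.
  by rewrite map_mxB map_mx1 mulmxBl v_eigen mul1mx scalerBl scale1r.
have SS1_v : map_mx phi (S ^+ n *m (S - 1%:M)) *m v k =
              (lambda k ^+ n * (lambda k - 1)) *: v k.
  rewrite map_mxM map_mxX -mulmxA S1_v -scalemxAr (eigen_expmx v_eigen).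
  by rewrite scalerA mulrC.
rewrite -!scalemxAr SS1_v -scalemxAr !scalerA /mode_weight.
case: ltnP => [k_in|k_out].
  by rewrite proj_in // mulrCA.
by rewrite proj_out // !scaler0 mulr0 scale0r.
Qed.

Hypotheses (lambda_inj : injective lambda)
  (lambda_neq1 : forall k : 'I_(k1 + k2), (k < k1)%N -> lambda k != 1).

Lemma card_excited_modes : (k1 <= #|[pred k | mode_weight k != 0%R]|)%N.
Proof.
rewrite -[X in (X <= _)%N]card_ord -(card_image (@lshift_inj k1 k2)).
apply/subset_leq_card/subsetP => _ /imageP[i _ ->].
by rewrite inE /mode_weight /= ltn_ord mulf_neq0 // subr_eq0 lambda_neq1 /=.
Qed.

Lemma ydat_notin_span j :
  (j < k1)%N -> y j.+1 \notin <<mkseq (fun i => y i.+1) j>>%VS.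
Proof.
move=> j_lt_k1.
have := expand_notin_span v_neq0 v_eigen lambda_inj ydat_expand
  (leq_trans j_lt_k1 card_excited_modes).
by apply: contra => /(map_mx_memv_span phi); rewrite -map_comp.
Qed.

End ExcitedModes.

Theorem lemma1 (R : rcfType) (nx nt : nat) (S : 'M[R]_nt) (F : 'M[R]_(nx, nt))
  (theta0 : 'cV[R]_nt) (k1 k2 : nat)
  (v : 'I_(k1 + k2) -> 'cV[R[i]]_nt) (lambda : 'I_(k1 + k2) -> R[i])
  (rho : 'I_(k1 + k2) -> R[i])
  (Hrho : forall i, rho i != 0)
  (Hv0 : forall i, v i != 0)
  (Heig : forall i, map_mx (real_complex R) S *m v i = lambda i *: v i)
  (Htheta : map_mx (real_complex R) theta0 = \sum_(i < k1 + k2) rho i *: v i)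
  (Hin : forall i : 'I_(k1 + k2), (i < k1)%N ->
     map_mx (real_complex R) (pinv F *m F) *m v i = v i)
  (Hout : forall i : 'I_(k1 + k2), (k1 <= i)%N ->
     map_mx (real_complex R) (pinv F *m F) *m v i = 0) :
  let y := ydat S F theta0 in
  (forall l i j : nat, (i <= l)%N -> (j <= l)%N -> i != j ->
     (zvec y i)^T *m zvec y j = 0) /\
  ((forall i j, i != j -> lambda i != lambda j) ->
   (forall i : 'I_(k1 + k2), (i < k1)%N -> lambda i != 1) ->
   forall n m : nat, (1 <= n)%N -> (1 <= m)%N -> (m <= minn n k1)%N ->
     free (take m (wseq y n))).
Proof.
move=> y; split=> [l i j _ _|lambda_distinct lambda_neq1 n m _ _].
  exact: zvec_orth.
have lambda_inj : injective lambda := fun i j => contra_eq (lambda_distinct i j).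
rewrite leq_min => /andP[m_le_n m_le_k1]; rewrite take_wseq //.
apply: free_wseq => j j_lt_m.
exact: (ydat_notin_span Hrho Hv0 Heig Htheta Hin Hout lambda_inj lambda_neq1
  (leq_trans j_lt_m m_le_k1)).
Qed.
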